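(* Let $A\colon X\to Y$ be a compact linear operator between separable Hilbert spaces with infinite-dimensional range, where $X=L^2(\mathcal{M})$, with singular value decomposition $Ax=\sum_{n=1}^\infty\sigma_n\langle x,v_n\rangle_X u_n$. Let $(c_n)_{n\in\mathbb{N}}$ be real numbers with $c_n\ge c_0>0$ for all $n$, and for $\alpha>0$ let $T^c_\alpha y=\sum_{n=1}^\infty\frac{\sigma_n}{\sigma_n^2+\alpha c_n}\langle y,u_n\rangle_Y v_n$. Then for every $y\in\mathcal{D}(A^\dagger)$, $$\|A^\dagger y-T^c_\alpha y\|_X\to 0\qquad\text{as }\alpha\to 0.$$
   Context: $\mathcal{M}$ is a measure space. The SVD consists of orthonormal systems $(u_n)$ in $Y$ and $(v_n)$ in $X$ and a non-increasing sequence $(\sigma_n)$ of positive reals with $\sigma_n\to0$. The pseudoinverse is $A^\dagger y=\sum_{n}\sigma_n^{-1}\langle y,u_n\rangle_Y v_n$ on the domain $\mathcal{D}(A^\dagger)=\{y\in Y:\sum_n\sigma_n^{-2}|\langle y,u_n\rangle_Y|^2<\infty\}$. *)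

From HB Require Import structures.
From mathcomp Require Import all_boot all_order all_algebra.
From mathcomp Require Import all_classical all_reals all_analysis.
Set Implicit Arguments. Unset Strict Implicit. Unset Printing Implicit Defensive.
Import Order.TTheory GRing.Theory Num.Theory.
Import numFieldNormedType.Exports.
Local Open Scope classical_set_scope.
Local Open Scope ring_scope.

(* [ip] is an inner product on V inducing the norm of V: symmetric, linear in
   the first argument, and ||x|| = sqrt <x,x> (positive definiteness follows). *)
Definition is_inner_product (R : realType) (V : normedModType R)
    (ip : V -> V -> R) : Prop :=
  [/\ forall x y, ip x y = ip y x,
      forall (a : R) (x y z : V), ip (a *: x + y) z = a * ip x z + ip y z
    & forall x, `|x| = Num.sqrt (ip x x)].

Definition separable_hilbert (R : realType) (V : completeNormedModType R)
    (ip : V -> V -> R) : Prop :=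
  is_inner_product ip /\
  exists D : set V, countable D /\ closure D = setT.

Definition orthonormal_sys (R : realType) (V : normedModType R)
    (ip : V -> V -> R) (e : nat -> V) : Prop :=
  forall i j, ip (e i) (e j) = (i == j)%:R.

Definition hsum (R : realType) (V : normedModType R) (f : nat -> V) : V :=
  limn (series f).

Definition compact_op (R : realType) (X Y : normedModType R) (A : X -> Y) : Prop :=
  compact (closure (A @` [set x : X | `|x| <= 1])).

Definition dom_pinv (R : realType) (Y : normedModType R) (ipY : Y -> Y -> R)
    (sigma : nat -> R) (u : nat -> Y) (y : Y) : Prop :=
  cvgn (series (fun n => (sigma n)^-2 * (ipY y (u n)) ^+ 2)).

Definition pinv_svd (R : realType) (X Y : normedModType R) (ipY : Y -> Y -> R)
    (sigma : nat -> R) (u : nat -> Y) (v : nat -> X) (y : Y) : X :=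
  hsum (fun n => ((sigma n)^-1 * ipY y (u n)) *: v n).

Definition Tc_reg (R : realType) (X Y : normedModType R) (ipY : Y -> Y -> R)
    (sigma c : nat -> R) (u : nat -> Y) (v : nat -> X) (alpha : R) (y : Y) : X :=
  hsum (fun n => (sigma n / ((sigma n) ^+ 2 + alpha * c n) * ipY y (u n)) *: v n).

(* With a_n = σ_n⁻¹ <y, u_n>, the coefficients of T^c_α y are q_α(n) a_n for the
   filter factor q_α(n) = σ_n² / (σ_n² + α c_n), which lies in [0, 1] and tends
   to 1 as α → 0⁺. By orthonormality of (v_n), ‖A†y - T^c_α y‖² is the series
   Σ (1 - q_α(n))² a_n², whose terms tend to 0 and are dominated by the summable
   a_n²; dominated convergence for series then gives the limit 0. *)

From HB Require Import structures.
From mathcomp Require Import all_boot all_order all_algebra.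
From mathcomp Require Import all_classical all_reals all_analysis.
Import Order.TTheory GRing.Theory Num.Theory.
Import numFieldNormedType.Exports.
Local Open Scope classical_set_scope.
Local Open Scope ring_scope.

Section dominated_series.
Context {R : realType}.

Lemma lim_series_le_split {u p : R ^nat} N :
  (forall n, 0 <= u n <= p n) -> cvgn (series p) ->
  limn (series u) <= series u N + (limn (series p) - series p N).
Proof.
move=> up p_cvg.
have u_ge0 n : 0 <= u n by case/andP: (up n).
have u_le_p n : u n <= p n by case/andP: (up n).
have p_ge0 n : 0 <= p n := le_trans (u_ge0 n) (u_le_p n).
apply: limr_le; first exact: series_le_cvg u_ge0 p_ge0 u_le_p p_cvg.
near=> n; have Nn : (N <= n)%N by near: n; exact: nbhs_infty_ge.
rewrite -lerBlDl sub_series_geq //.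
apply: (@le_trans _ _ (\sum_(N <= k < n) p k)); first exact: ler_sum.
rewrite -sub_series_geq // lerB //.
by apply: nondecreasing_cvgn_le p_cvg _; exact: nondecreasing_series.
Unshelve. all: by end_near. Qed.

Lemma lim_series_dominated_cvg0 {T : Type} {F : set_system T} {FF : Filter F}
    {p : R ^nat} {q : T -> R ^nat} :
  cvgn (series p) ->
  (\forall t \near F, forall n, 0 <= q t n <= p n) ->
  (forall n, q t n @[t --> F] --> 0) ->
  limn (series (q t)) @[t --> F] --> 0.
Proof.
move=> p_cvg dom q_cvg0; apply/cvgrPdist_lt => e e0.
(* Cut at an N beyond which Σ p has tail < e/2; the head is a finite sum. *)
have e20 : 0 < e / 2 by rewrite divr_gt0.
have /cvgrPdist_lt/(_ _ e20)[N _ /(_ N (leqnn N)) tailN] := p_cvg.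
have head : series (q t) N @[t --> F] --> 0.
  have : \sum_(0 <= k < N) q t k @[t --> F] --> \sum_(0 <= k < N) (0 : R).
    by apply: cvg_big => //; exact: add_continuous.
  by rewrite big1_eq => head; under eq_cvg do rewrite seriesEnat.
near=> t.
have qt : forall n, 0 <= q t n <= p n by near: t.
have q_ge0 n : 0 <= q t n by case/andP: (qt n).
have q_le_p n : q t n <= p n by case/andP: (qt n).
have lim_ge0 : 0 <= limn (series (q t)).
  apply: limr_ge; last by apply: nearW => n; apply: sumr_ge0 => k _.
  exact: series_le_cvg q_ge0 (fun n => le_trans (q_ge0 n) (q_le_p n)) q_le_p p_cvg.
rewrite sub0r normrN ger0_norm //.
apply: le_lt_trans (lim_series_le_split N qt p_cvg) _.
rewrite [e]splitr ltrD //; last by apply: le_lt_trans (ler_norm _) tailN.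
have : `|0 - series (q t) N| < e / 2 by near: t; move/cvgrPdist_lt: head; exact.
by rewrite sub0r normrN; apply: le_lt_trans; exact: ler_norm.
Unshelve. all: by end_near. Qed.

End dominated_series.

Lemma ler_sqr_piMr (R : realDomainType) (x t : R) :
  0 <= t <= 1 -> (x * t) ^+ 2 <= x ^+ 2.
Proof.
by case/andP=> t_ge0 t_le1; rewrite exprMn (ler_piMr (sqr_ge0 x)) ?exprn_ile1.
Qed.

Section orthonormal_series.
Context {R : realType} {X : completeNormedModType R} {ip : X -> X -> R}.
Hypothesis ip_inner : is_inner_product ip.
Context {v : nat -> X}.
Hypothesis v_orthonormal : orthonormal_sys ip v.

Let ipC x y : ip x y = ip y x. Proof. by case: ip_inner. Qed.
Let ipZDl a x y z : ip (a *: x + y) z = a * ip x z + ip y z.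
Proof. by case: ip_inner. Qed.
Let normE x : `|x| = Num.sqrt (ip x x). Proof. by case: ip_inner. Qed.

Lemma ip0l z : ip 0 z = 0.
Proof. by have := ipZDl (-1) 0 0 z; rewrite scaler0 addr0 mulN1r addNr. Qed.

Lemma ipZl a x z : ip (a *: x) z = a * ip x z.
Proof. by rewrite -[a *: x]addr0 ipZDl ip0l addr0. Qed.

Lemma ipZr a x z : ip x (a *: z) = a * ip x z.
Proof. by rewrite ipC ipZl ipC. Qed.

Lemma ipDl x y z : ip (x + y) z = ip x z + ip y z.
Proof. by rewrite -[x]scale1r ipZDl mul1r scale1r. Qed.

Lemma ip_suml I (r : seq I) (F : I -> X) z :
  ip (\sum_(i <- r) F i) z = \sum_(i <- r) ip (F i) z.
Proof. exact: (big_morph (ip^~ z) (fun x y => ipDl x y z) (ip0l z)). Qed.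

Lemma ip_sumr I (r : seq I) (F : I -> X) z :
  ip z (\sum_(i <- r) F i) = \sum_(i <- r) ip z (F i).
Proof. by rewrite ipC ip_suml; under eq_bigr do rewrite ipC. Qed.

Lemma norm_sum_orthonormal N M (d : R ^nat) :
  `|\sum_(N <= k < M) d k *: v k| = Num.sqrt (\sum_(N <= k < M) d k ^+ 2).
Proof.
rewrite normE ip_suml; congr Num.sqrt; apply: eq_big_seq => i i_in.
rewrite ip_sumr (bigD1_seq i) //= ?iota_uniq // big1 => [|j ji].
  by rewrite addr0 ipZl ipZr v_orthonormal eqxx mulr1 expr2.
by rewrite ipZl ipZr v_orthonormal eq_sym (negbTE ji) !mulr0.
Qed.

Lemma cvg_series_orthonormal {d : R ^nat} :
  cvgn (series (fun n => d n ^+ 2)) -> cvgn (series (fun n => d n *: v n)).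
Proof.
move=> /cauchy_cvgP/cauchy_seriesP d_cauchy.
apply/cauchy_cvgP/cauchy_seriesP => e e0.
apply: filterS (d_cauchy _ (exprn_gt0 2 e0)) => n /=.
have S_ge0 : 0 <= \sum_(n.1 <= k < n.2) d k ^+ 2.
  by apply: sumr_ge0 => k _; exact: sqr_ge0.
rewrite norm_sum_orthonormal !ger0_norm ?sqrtr_ge0 // => d2_small.
by rewrite -[e]ger0_norm ?(ltW e0) // -sqrtr_sqr ltr_sqrt // exprn_gt0.
Qed.

Lemma norm_hsum_orthonormal (d : R ^nat) :
  cvgn (series (fun n => d n ^+ 2)) ->
  `|hsum (fun n => d n *: v n)| = Num.sqrt (limn (series (fun n => d n ^+ 2))).
Proof.
move=> d2_cvg; apply: (cvg_unique _ (cvg_norm (cvg_series_orthonormal d2_cvg))) => //.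
rewrite [X in X @ _](_ : _ = Num.sqrt \o series (fun n => d n ^+ 2)).
  by apply: cvg_comp d2_cvg _; exact: sqrt_continuous.
by apply/funext => n /=; rewrite !seriesEnat /= norm_sum_orthonormal.
Qed.

Lemma hsumB_orthonormal (a b : R ^nat) :
  cvgn (series (fun n => a n ^+ 2)) -> cvgn (series (fun n => b n ^+ 2)) ->
  hsum (fun n => a n *: v n) - hsum (fun n => b n *: v n) =
  hsum (fun n => (a n - b n) *: v n).
Proof.
move=> /cvg_series_orthonormal a_cvg /cvg_series_orthonormal b_cvg.
have -> : (fun n => (a n - b n) *: v n) =
    (fun n => a n *: v n) - (fun n => b n *: v n).
  by apply/funext => n; rewrite scalerBl.
by rewrite /hsum seriesD seriesN limB.
Qed.

Lemma norm_sub_hsum_filter_cvg0 {T : Type} {F : set_system T} {FF : Filter F}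
    {a : R ^nat} {q : T -> R ^nat} :
  cvgn (series (fun n => a n ^+ 2)) ->
  (\forall t \near F, forall n, 0 <= q t n <= 1) ->
  (forall n, q t n @[t --> F] --> (1 : R)) ->
  `|hsum (fun n => a n *: v n) - hsum (fun n => (q t n * a n) *: v n)|
    @[t --> F] --> 0.
Proof.
move=> a2_cvg q_itv q_cvg1.
pose e t n := a n - q t n * a n.
have e_sqr_le t n : 0 <= q t n <= 1 -> 0 <= e t n ^+ 2 <= a n ^+ 2.
  move=> /andP[q_ge0 q_le1]; rewrite sqr_ge0 /e -{1}[a n]mul1r -mulrBl mulrC.
  by rewrite ler_sqr_piMr // subr_ge0 q_le1 gerBl.
have e2_cvg0 : limn (series (fun n => e t n ^+ 2)) @[t --> F] --> 0.
  apply: lim_series_dominated_cvg0 a2_cvg _ _ => [|n].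
    by apply: filterS q_itv => t q_itv_t n; exact: e_sqr_le.
  have : e t n @[t --> F] --> a n - 1 * a n.
    exact: cvgB (cvg_cst _) (cvgM (q_cvg1 n) (cvg_cst _)).
  rewrite mul1r subrr => e_cvg0.
  by rewrite -[X in _ --> X](mulr0 0); exact: (cvgM e_cvg0 e_cvg0).
rewrite -[X in _ --> X]sqrtr0.
apply: (cvg_trans _ (cvg_comp _ _ e2_cvg0 (@sqrt_continuous R 0))).
apply: near_eq_cvg; apply: filterS q_itv => t q_itv_t /=.
have qa2_cvg : cvgn (series (fun n => (q t n * a n) ^+ 2)).
  by apply: series_le_cvg a2_cvg => n; rewrite ?sqr_ge0 // mulrC ler_sqr_piMr.
have e2_cvg : cvgn (series (fun n => e t n ^+ 2)).
  apply: series_le_cvg a2_cvg => n; [exact: sqr_ge0 | exact: sqr_ge0 |].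
  by have /andP[_] := e_sqr_le t n (q_itv_t n).
by rewrite hsumB_orthonormal // norm_hsum_orthonormal.
Qed.

End orthonormal_series.

Definition tikhonov_filter {R : fieldType} (s k alpha : R) : R :=
  s ^+ 2 / (s ^+ 2 + alpha * k).

Lemma tikhonov_filter_itv (R : realFieldType) (s k alpha : R) :
  0 < k -> 0 < alpha -> 0 <= tikhonov_filter s k alpha <= 1.
Proof.
move=> k_gt0 alpha_gt0; have ak_gt0 : 0 < alpha * k by rewrite mulr_gt0.
have den_gt0 : 0 < s ^+ 2 + alpha * k by rewrite ltr_wpDl ?sqr_ge0.
rewrite /tikhonov_filter divr_ge0 ?sqr_ge0 ?(ltW den_gt0) //=.
by rewrite ler_pdivrMr // mul1r lerDl ltW.
Qed.

Lemma tikhonov_filter_cvg1 (R : realType) (s k : R) : s != 0 ->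
  tikhonov_filter s k alpha @[alpha --> 0^'+] --> (1 : R).
Proof.
move=> s_neq0; apply: cvg_at_right_filter.
have s2_neq0 : s ^+ 2 + 0 * k != 0 by rewrite mul0r addr0 expf_neq0.
have alphak_cvg : alpha * k @[alpha --> 0] --> 0 * k.
  exact: cvgM cvg_id (cvg_cst k).
rewrite [X in _ --> X](_ : 1 = s ^+ 2 / (s ^+ 2 + 0 * k)); last first.
  by rewrite mul0r addr0 divff // expf_neq0.
exact: cvgM (cvg_cst _) (cvgV s2_neq0 (cvgD (cvg_cst _) alphak_cvg)).
Qed.

(* No condition on the denominator: when it vanishes both sides are 0. *)
Lemma tikhonov_coefE (R : fieldType) (s k alpha : R) : s != 0 ->
  s / (s ^+ 2 + alpha * k) = tikhonov_filter s k alpha * s^-1.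
Proof. by move=> s_neq0; rewrite /tikhonov_filter mulrAC expr2 mulfK. Qed.

Theorem theorem4p2 (R : realType) (X Y : completeNormedModType R)
    (ipX : X -> X -> R) (ipY : Y -> Y -> R)
    (hX : separable_hilbert ipX) (hY : separable_hilbert ipY)
    (A : {linear X -> Y}) (hAc : compact_op A)
    (sigma : nat -> R) (u : nat -> Y) (v : nat -> X)
    (hu : orthonormal_sys ipY u) (hv : orthonormal_sys ipX v)
    (hsig_pos : forall n, 0 < sigma n)
    (hsig_noninc : forall n, sigma n.+1 <= sigma n)
    (hsig_lim : sigma @ \oo --> 0)
    (hA : forall x, A x = hsum (fun n => (sigma n * ipX x (v n)) *: u n))
    (c : nat -> R) (c0 : R) (hc0 : 0 < c0) (hc : forall n, c0 <= c n)
    (y : Y) (hy : dom_pinv ipY sigma u y) :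
  `|pinv_svd ipY sigma u v y - Tc_reg ipY sigma c u v alpha y| @[alpha --> 0^'+] --> 0.
Proof.
have [ipX_inner _] := hX.
pose a n := (sigma n)^-1 * ipY y (u n).
pose q alpha n := tikhonov_filter (sigma n) (c n) alpha.
have Tc_regE alpha :
    Tc_reg ipY sigma c u v alpha y = hsum (fun n => (q alpha n * a n) *: v n).
  congr hsum; apply/funext => n.
  by rewrite tikhonov_coefE ?lt0r_neq0 // mulrA.
under eq_cvg do rewrite Tc_regE.
apply: (norm_sub_hsum_filter_cvg0 ipX_inner hv).
- suff -> : (fun n => a n ^+ 2) = (fun n => (sigma n)^-2 * ipY y (u n) ^+ 2) by [].
  by apply/funext => n; rewrite /a exprMn exprVn.
- near=> alpha => n; apply: tikhonov_filter_itv.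
    exact: lt_le_trans hc0 (hc n).
  by near: alpha; exact: nbhs_right_gt.
- by move=> n; apply: tikhonov_filter_cvg1; exact: lt0r_neq0.
Unshelve. all: by end_near. Qed.
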